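(* Let $\Gamma=\{f_1,\dots,f_n\}$ be a family of weak weight-functions such that $\mathsf{BGM}_\Gamma$ is shift-invariant. Then $\mathsf{BGM}_\Gamma$ is a pre-aggregation function which is $(k,\dots,k)$-increasing for every $k>0$.
   Context: A family of weak weight-functions (wFWF) is a family $\Gamma=\{f_i:[0,1]^n\to[0,1]\mid 1\le i\le n\}$ such that (I) $\sum_{i=1}^n f_i(\mathbf{x})\le 1$ for all $\mathbf{x}\in[0,1]^n$ and (II) $\sum_{i=1}^n f_i(1,\dots,1)=1$. The bounded generalized mixture function is $\mathsf{BGM}_\Gamma(\mathbf{x})=\sum_{i=1}^n f_i(\mathbf{x})\,x_i$. A function $F:[0,1]^n\to[0,1]$ is shift-invariant if $F(x_1+r,\dots,x_n+r)=F(\mathbf{x})+r$ whenever $r\in[-1,1]$, $(x_1+r,\dots,x_n+r)\in[0,1]^n$ and $F(\mathbf{x})+r\in[0,1]$. For a nonzero $\mathbf{r}\in\mathbb{R}^n$, $F$ is $\mathbf{r}$-increasing if $F(\mathbf{x})\le F(x_1+tr_1,\dots,x_n+tr_n)$ for all $\mathbf{x}\in[0,1]^n$ and $t>0$ with $(x_1+tr_1,\dots,x_n+tr_n)\in[0,1]^n$. $F$ is a pre-aggregation function if $F(0,\dots,0)=0$, $F(1,\dots,1)=1$ and $F$ is $\mathbf{r}$-increasing for some nonzero $\mathbf{r}\in[0,1]^n$. *)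

From mathcomp Require Import all_boot all_order all_algebra.
From mathcomp Require Import reals.
Set Implicit Arguments. Unset Strict Implicit. Unset Printing Implicit Defensive.
Import Order.TTheory GRing.Theory Num.Theory.
Local Open Scope ring_scope.

Section Defs.
Variables (R : realType) (n : nat).

Definition in01 (a : R) : Prop := 0 <= a /\ a <= 1.

Definition in_cube (x : 'I_n -> R) : Prop := forall i, in01 (x i).

Definition shiftv (x : 'I_n -> R) (r : R) : 'I_n -> R := fun i => x i + r.

Definition movev (x : 'I_n -> R) (t : R) (r : 'I_n -> R) : 'I_n -> R :=
  fun i => x i + t * r i.

(* A function [0,1]^n -> [0,1] is modelled as a total function on R^n whose
   values on the cube lie in [0,1]; only its values on the cube matter. *)
Definition maps_cube_01 (F : ('I_n -> R) -> R) : Prop :=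
  forall x, in_cube x -> in01 (F x).

Definition wFWF (f : 'I_n -> ('I_n -> R) -> R) : Prop :=
  (forall i, maps_cube_01 (f i)) /\
  (forall x, in_cube x -> \sum_(i < n) f i x <= 1) /\
  \sum_(i < n) f i (fun _ => 1) = 1.

Definition BGM (f : 'I_n -> ('I_n -> R) -> R) (x : 'I_n -> R) : R :=
  \sum_(i < n) f i x * x i.

Definition shift_invariant (F : ('I_n -> R) -> R) : Prop :=
  forall x r, -1 <= r <= 1 -> in_cube x -> in_cube (shiftv x r) ->
    in01 (F x + r) -> F (shiftv x r) = F x + r.

Definition r_increasing (F : ('I_n -> R) -> R) (r : 'I_n -> R) : Prop :=
  forall x t, in_cube x -> 0 < t -> in_cube (movev x t r) ->
    F x <= F (movev x t r).

Definition nonzero_vec (r : 'I_n -> R) : Prop := exists i, r i != 0.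

Definition pre_aggregation (F : ('I_n -> R) -> R) : Prop :=
  maps_cube_01 F /\
  F (fun _ => 0) = 0 /\ F (fun _ => 1) = 1 /\
  exists r, nonzero_vec r /\ in_cube r /\ r_increasing F r.

End Defs.

From mathcomp Require Import all_boot all_order all_algebra.
From mathcomp Require Import reals.
Set Implicit Arguments. Unset Strict Implicit. Unset Printing Implicit Defensive.
Import Order.TTheory GRing.Theory Num.Theory.
Local Open Scope ring_scope.

(* BGM is a sub-convex combination of the coordinates, so on the cube it lies
   between 0 and the largest coordinate.  Moving x along (k,...,k) is the
   shift by t k; the upper bound keeps BGM x + t k inside [0,1], so shift
   invariance applies and gives BGM (x + t k) = BGM x + t k >= BGM x. *)

Section ShiftInvariantIncreasing.
Variables (R : realType) (n : nat) (F : ('I_n -> R) -> R).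
Hypothesis n_gt0 : (0 < n)%N.
Hypothesis F_shift : shift_invariant F.
Hypothesis F_ge0 : forall x, in_cube x -> 0 <= F x.
Hypothesis F_le_ub : forall x c, in_cube x -> (forall i, x i <= c) -> F x <= c.

Lemma shift_invariant_cst_increasing (k : R) :
  0 < k -> r_increasing F (fun _ => k).
Proof.
move=> k_gt0 x t x_cube t_gt0 moved_cube.
have tk_gt0 : 0 < t * k by rewrite mulr_gt0.
have x_le i : x i <= 1 - t * k by rewrite lerBrDr; case: (moved_cube i).
have tk_le1 : t * k <= 1.
  rewrite -subr_ge0; have [x0_ge0 _] := x_cube (Ordinal n_gt0).
  exact: le_trans x0_ge0 (x_le _).
change (F x <= F (shiftv x (t * k))).
rewrite F_shift //; first by rewrite lerDl ltW.
- by rewrite tk_le1 andbT (le_trans _ (ltW tk_gt0)) // lerN10.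
- split; first by rewrite addr_ge0 // ?F_ge0 // ltW.
  by rewrite -lerBrDr F_le_ub.
Qed.

End ShiftInvariantIncreasing.

Section BGMProperties.
Variables (R : realType) (n : nat) (f : 'I_n -> ('I_n -> R) -> R).
Hypothesis f_cube : forall i, maps_cube_01 (f i).
Hypothesis f_sum_le1 : forall x, in_cube x -> \sum_(i < n) f i x <= 1.
Hypothesis f_sum1 : \sum_(i < n) f i (fun _ => 1) = 1.

Lemma BGM_cst0 : BGM f (fun _ => 0) = 0.
Proof. by rewrite /BGM big1 // => i _; rewrite mulr0. Qed.

Lemma wFWF_dim_gt0 : (0 < n)%N.
Proof.
by case: n f f_sum1 => // f' /eqP; rewrite big_ord0 eq_sym oner_eq0.
Qed.

Lemma BGM_ge0 x : in_cube x -> 0 <= BGM f x.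
Proof.
by move=> x_cube; apply: sumr_ge0 => i _; rewrite mulr_ge0 //;
  [case: (f_cube i x_cube) | case: (x_cube i)].
Qed.

Lemma BGM_le_ub x c : in_cube x -> (forall i, x i <= c) -> BGM f x <= c.
Proof.
move=> x_cube x_le.
have c_ge0 : 0 <= c.
  have [x0_ge0 _] := x_cube (Ordinal wFWF_dim_gt0).
  exact: le_trans x0_ge0 (x_le _).
apply: (@le_trans _ _ (\sum_(i < n) f i x * c)).
  by apply: ler_sum => i _; rewrite ler_wpM2l //; case: (f_cube i x_cube).
by rewrite -mulr_suml ler_piMl // f_sum_le1.
Qed.

Lemma BGM_maps_cube_01 : maps_cube_01 (BGM f).
Proof.
by move=> x x_cube; split; [exact: BGM_ge0 | apply: BGM_le_ub => // i; case: (x_cube i)].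
Qed.

Lemma BGM_cst1 : BGM f (fun _ => 1) = 1.
Proof. by rewrite -[RHS]f_sum1; apply: eq_bigr => i _; rewrite mulr1. Qed.

End BGMProperties.

Theorem proposition9 (R : realType) (n : nat) (f : 'I_n -> ('I_n -> R) -> R) :
  wFWF f -> shift_invariant (BGM f) ->
  pre_aggregation (BGM f) /\
  (forall k : R, 0 < k -> r_increasing (BGM f) (fun _ => k)).
Proof.
move=> [f_cube [f_sum_le1 f_sum1]] shiftBGM.
have n_gt0 := wFWF_dim_gt0 f_sum1.
have cst_increasing k : 0 < k -> r_increasing (BGM f) (fun _ => k).
  apply: (shift_invariant_cst_increasing n_gt0 shiftBGM).
  - exact: BGM_ge0 f_cube.
  - exact: BGM_le_ub f_cube f_sum_le1 f_sum1.
split=> //; split; first exact: BGM_maps_cube_01.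
split; first exact: BGM_cst0.
split; first exact: BGM_cst1.
exists (fun _ => 1); split; first by exists (Ordinal n_gt0); rewrite oner_eq0.
by split; [move=> i; rewrite /in01 ler01 | exact: cst_increasing ltr01].
Qed.
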